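(* For every nonnegative integer $L$, \[ G(L+1,L;1/2,2,2)=\sum_{j\in\mathbb{Z}}(-1)^j q^{\frac{1}{2}j(5j+3)}\begin{bmatrix}2L+1\\ L-2j\end{bmatrix} =\sum_{n\geq 0}q^{n(n+1)}\begin{bmatrix}L\\ n\end{bmatrix}. \]
   Context: $(x;q)_n=\prod_{i=0}^{n-1}(1-xq^i)$, $(q)_n=(q;q)_n$. The $q$-binomial coefficient is $\begin{bmatrix}n\\ m\end{bmatrix}=\frac{(q)_n}{(q)_m(q)_{n-m}}$ if $m$ and $n-m$ are nonnegative integers and $0$ otherwise. For integers $N,M$, a positive integer $K$ and rationals $\alpha,\beta$, $G(N,M;\alpha,\beta,K)=\sum_{j\in\mathbb{Z}}(-1)^jq^{\frac12 Kj((\alpha+\beta)j+\alpha-\beta)}\begin{bmatrix}M+N\\ N-Kj\end{bmatrix}$. *)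

(* Polynomials in q over rat: q = 'X. *)
From mathcomp Require Import all_boot all_order all_algebra.
Set Implicit Arguments. Unset Strict Implicit. Unset Printing Implicit Defensive.
Import Order.TTheory GRing.Theory Num.Theory.
Local Open Scope ring_scope.

Definition qpoch (n : nat) : {poly rat} := \prod_(i < n) (1 - 'X ^+ i.+1).

(* q-binomial [n, m] = (q)_n / ((q)_m (q)_{n-m}) if m, n-m >= 0, else 0.
   The quotient is exact polynomial division (the denominator divides). *)
Definition qbinom (n m : int) : {poly rat} :=
  if (0 <= m) && (0 <= n - m) then
    qpoch `|n|%N %/ (qpoch `|m|%N * qpoch `|n - m|%N)
  else 0.

(* q^e for a rational exponent e; only meaningful (and only used) when e is a
   nonnegative integer, in which case it is 'X^e. *)
Definition qpowQ (e : rat) : {poly rat} :=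
  if (denq e == 1) && (0 <= e) then 'X ^+ `|numq e|%N else 0.

(* sum over j in Z of F j, restricted to the window -B <= j <= B
   (used only when F vanishes outside the window). *)
Definition zsum (B : nat) (F : int -> {poly rat}) : {poly rat} :=
  \sum_(i < (B + B).+1) F (i%:Z - B%:Z).

(* The binomial vanishes unless 0 <= N - K j <= M + N, which (K >= 1) forces
   |j| <= |N| + |M|, so the window below contains the whole support. *)
Definition G (N M : int) (alpha beta : rat) (K : nat) : {poly rat} :=
  zsum (`|N|%N + `|M|%N) (fun j =>
    (-1) ^+ `|j|%N
    * qpowQ ((1 / 2) * K%:Q * j%:~R * ((alpha + beta) * j%:~R + alpha - beta))
    * qbinom (M + N) (N - K%:Z * j)).

From mathcomp Require Import all_boot all_order all_algebra zify ring.
Import Order.TTheory GRing.Theory Num.Theory.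
Local Open Scope ring_scope.

(* Let P_L = sum_j (-1)^j q^(j(5j+1)/2) [2L, L-2j] and Q_L be the middle sum of the
   theorem; G(L+1, L; 1/2, 2, 2) is Q_L read backwards (j -> -j, then the symmetry
   [n, k] = [n, n-k]).  Expanding the binomials of P_(L+1) and Q_(L+1) by the two
   q-Pascal rules gives
     P_(L+1) = P_L + q^(L+1) Q_L,   Q_(L+1) = q^(L+1) P_L + (1 - q^(L+1) + q^(2L+2)) Q_L,
   because the extra sums produced by the second rule are antisymmetric, resp. equal
   to -q^(L+1) Q_L, under the reflection j -> -1-j.  The sums
   D_a(L) = sum_n q^(n^2+an) [L, n] satisfy the same recurrences for a = 0, 1, again
   by the q-Pascal rules, and all four sums equal 1 at L = 0. *)

Fixpoint qbin (n k : nat) : {poly rat} :=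
  match n, k with
  | _, 0 => 1
  | 0, _.+1 => 0
  | n.+1, k.+1 => qbin n k + 'X ^+ k.+1 * qbin n k.+1
  end.

Lemma qbin0 n : qbin n 0 = 1. Proof. by case: n. Qed.

Lemma qbinSS n k : qbin n.+1 k.+1 = qbin n k + 'X ^+ k.+1 * qbin n k.+1.
Proof. by []. Qed.

Lemma qbin_small n k : (n < k)%N -> qbin n k = 0.
Proof.
elim: n k => [|n IHn] [|k] //= ltnk.
by rewrite !IHn ?mulr0 ?addr0 // ltnW.
Qed.

Lemma qbinn n : qbin n n = 1.
Proof. by elim: n => //= n ->; rewrite qbin_small // mulr0 addr0. Qed.

Lemma qpoch0 : qpoch 0 = 1. Proof. by rewrite /qpoch big_ord0. Qed.

Lemma qpochS n : qpoch n.+1 = qpoch n * (1 - 'X ^+ n.+1).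
Proof. by rewrite /qpoch big_ord_recr. Qed.

Lemma qpoch_neq0 n : qpoch n != 0.
Proof.
elim: n => [|n IHn]; first by rewrite qpoch0 oner_neq0.
rewrite qpochS mulf_neq0 //; apply/eqP => /(congr1 (coefp 0)) /=.
by rewrite coefB coef1 coefXn subr0 coef0 => /eqP; rewrite oner_eq0.
Qed.

Lemma qbin_fact n k : (k <= n)%N -> qbin n k * (qpoch k * qpoch (n - k)) = qpoch n.
Proof.
elim: n k => [|n IHn] [|k] //= lekn; rewrite ?qpoch0 ?subn0 ?mul1r //.
rewrite subSS; have [ltkn|] := ltnP k n; last first.
  move=> lenk; have -> : k = n by lia.
  by rewrite qbinn qbin_small // subnn qpoch0 mulr0 addr0 !mul1r mulr1 qpochS.
have Xexp : 'X ^+ k.+1 * 'X ^+ (n - k) = 'X ^+ n.+1 :> {poly rat}.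
  by rewrite -exprD; congr ('X ^+ _); lia.
have Enk : (n - k = (n - k.+1).+1)%N by lia.
transitivity (qbin n k * (qpoch k * qpoch (n - k)) * (1 - 'X ^+ k.+1)
  + 'X ^+ k.+1 * (qbin n k.+1 * (qpoch k.+1 * qpoch (n - k.+1))) * (1 - 'X ^+ (n - k))).
  by rewrite Enk !qpochS; ring.
by rewrite IHn 1?ltnW // IHn // qpochS -Xexp; ring.
Qed.

Lemma qbin_sub n k : (k <= n)%N -> qbin n (n - k) = qbin n k.
Proof.
move=> lekn; apply: (mulIf (qpoch_neq0 k)); apply: (mulIf (qpoch_neq0 (n - k))).
have := qbin_fact _ _ (leq_subr k n); rewrite subKn // => fact_sub.
by rewrite -!mulrA qbin_fact // [qpoch k * _]mulrC fact_sub.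
Qed.

Lemma qbinSS_dual n k : qbin n.+1 k.+1 = 'X ^+ (n - k) * qbin n k + qbin n k.+1.
Proof.
have [ltkn|] := ltnP k n; last first.
  rewrite leq_eqVlt => /orP[/eqP->|ltnk]; last by rewrite !qbin_small ?mulr0 ?addr0 // ltnW.
  by rewrite !qbinn subnn mul1r qbin_small // addr0.
have Enk : (n - k = (n - k.+1).+1)%N by lia.
rewrite -(qbin_sub n.+1 k.+1) 1?ltnW // subSS Enk qbinSS -Enk addrC.
by rewrite !qbin_sub // ltnW.
Qed.

Definition qbinz (n k : int) : {poly rat} :=
  if (n, k) is (Posz n, Posz k) then qbin n k else 0.

Lemma qbinz_nat (n k : nat) : qbinz n k = qbin n k. Proof. by []. Qed.

Lemma qbinz_out n k : (k < 0) || (n < k) -> qbinz n k = 0.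
Proof. by case: n => n; case: k => k //= out; rewrite /qbinz qbin_small //; lia. Qed.

Lemma qbinomE n k : qbinom n k = qbinz n k.
Proof.
rewrite /qbinom; case: ifP => [/andP[k0 kn]|out]; last first.
  by rewrite qbinz_out //; lia.
have [n' ?] : exists n' : nat, n = n' by exists `|n|%N; lia.
have [k' ?] : exists k' : nat, k = k' by exists `|k|%N; lia.
subst n k; have lekn : (k' <= n')%N by lia.
have -> : `|n'%:Z - k'%:Z|%N = (n' - k')%N by lia.
by rewrite -(qbin_fact _ _ lekn) mulpK // mulf_neq0 // qpoch_neq0.
Qed.

Lemma qbinz_support n k : qbinz n k != 0 -> 0 <= k <= n.
Proof.
apply: contraR; rewrite negb_and -!ltNge => out.
by rewrite qbinz_out ?eqxx //; lia.
Qed.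

Lemma qbinz_sub n k : qbinz n (n - k) = qbinz n k.
Proof.
have [kn|] := boolP (0 <= k <= n); last by move=> out; rewrite !qbinz_out //; lia.
have [n' ?] : exists n' : nat, n = n' by exists `|n|%N; lia.
have [k' ?] : exists k' : nat, k = k' by exists `|k|%N; lia.
subst n k; have -> : n'%:Z - k'%:Z = (n' - k')%N by lia.
by rewrite !qbinz_nat qbin_sub //; lia.
Qed.

Definition Xz (z : int) : {poly rat} := 'X ^+ `|z|%N.

Lemma XzD a b : 0 <= a -> 0 <= b -> Xz (a + b) = Xz a * Xz b.
Proof. by move=> a0 b0; rewrite /Xz -exprD; congr ('X ^+ _); lia. Qed.

Lemma Xz_natS (n : nat) : Xz (n%:Z + 1) = 'X ^+ n.+1.
Proof. by rewrite /Xz; congr ('X ^+ _); lia. Qed.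

Lemma qbinz_pascal n k : 0 <= n -> qbinz (n + 1) k = qbinz n (k - 1) + Xz k * qbinz n k.
Proof.
move=> n0; have [n' ->] : exists n' : nat, n = n' by exists `|n|%N; lia.
have -> : n'%:Z + 1 = n'.+1 by lia.
have [k0|] := ltP k 0; first by rewrite !qbinz_out ?mulr0 ?addr0 //; lia.
case: k => // -[_|k _]; first by rewrite (qbinz_out n' (0 - 1)) // mul1r add0r !qbinz_nat !qbin0.
by have -> : k.+1%:Z - 1 = k by lia.
Qed.

Lemma qbinz_pascal_dual n k :
  0 <= n -> qbinz (n + 1) k = Xz (n + 1 - k) * qbinz n (k - 1) + qbinz n k.
Proof.
move=> n0; rewrite -[LHS]qbinz_sub qbinz_pascal // addrC.
by congr (_ * _ + _); rewrite -[RHS]qbinz_sub; congr qbinz; ring.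
Qed.

Lemma Xz_mul_qbinz s n k a b c d :
  (0 <= k <= n -> [/\ 0 <= a, 0 <= b, 0 <= c, 0 <= d & a + b = c + d]) ->
  Xz a * (s * Xz b * qbinz n k) = Xz c * (s * Xz d * qbinz n k).
Proof.
have [->|/qbinz_support kn] := eqVneq (qbinz n k) 0; first by rewrite !mulr0.
case/(_ kn) => a0 b0 c0 d0 e.
transitivity (s * Xz (a + b) * qbinz n k); first by rewrite XzD //; ring.
by rewrite e XzD //; ring.
Qed.

Lemma eq_zsum {B} {f g : int -> {poly rat}} : f =1 g -> zsum B f = zsum B g.
Proof. by move=> fg; apply: eq_bigr => i _; apply: fg. Qed.

Lemma zsumD B f g : zsum B (fun j => f j + g j) = zsum B f + zsum B g.
Proof. exact: big_split. Qed.

Lemma zsumZ B c f : zsum B (fun j => c * f j) = c * zsum B f.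
Proof. by rewrite /zsum mulr_sumr. Qed.

Lemma zsumN B f : zsum B (fun j => - f j) = - zsum B f.
Proof. exact: sumrN. Qed.

Lemma zsum_opp B f : zsum B (fun j => f (- j)) = zsum B f.
Proof.
rewrite /zsum (reindex_inj rev_ord_inj) /=; apply: eq_bigr => i _.
by congr f; have := ltn_ord i; lia.
Qed.

Lemma zsumS B f : zsum B.+1 f = f (- B.+1%:Z) + zsum B f + f B.+1.
Proof.
rewrite /zsum (_ : (B.+1 + B.+1).+1 = (B + B).+1.+2)%N; last by lia.
rewrite big_ord_recl big_ord_recr /= addrA.
congr (f _ + _ + f _); rewrite /bump /=; try lia.
by apply: eq_bigr => i _; congr f; lia.
Qed.

Lemma zsum_widen B k f : (forall j, (B < `|j|)%N -> f j = 0) -> zsum (B + k) f = zsum B f.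
Proof.
move=> f_out; elim: k => [|k IHk]; first by rewrite addn0.
by rewrite addnS zsumS IHk !f_out ?addr0 ?add0r //; lia.
Qed.

Lemma zsum_shift B f : zsum B (fun j => f (j - 1)) = zsum B f - f B + f (- B%:Z - 1).
Proof.
rewrite /zsum big_ord_recl [in RHS]big_ord_recr /=.
rewrite (_ : (B + B)%N%:Z - B%:Z = B%:Z); last by lia.
rewrite addrK addrC; congr (_ + f _); try lia.
by apply: eq_bigr => i _; congr f; rewrite /bump /=; lia.
Qed.

Lemma zsum_reflect (B : nat) (f g : int -> {poly rat}) : (forall j, f (- 1 - j) = g j) ->
  f B%:Z = 0 -> f (- B%:Z - 1) = 0 -> zsum B f = zsum B g.
Proof.
move=> fg fB0 fB1; have -> : zsum B g = zsum B (fun j => f (j - 1)).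
  by rewrite -(eq_zsum fg) -zsum_opp; apply: eq_zsum => j; congr f; ring.
by rewrite zsum_shift fB0 fB1 subr0 addr0.
Qed.

Lemma poly_eq0_oppr (p : {poly rat}) : - p = p -> p = 0.
Proof.
move=> Np; apply/eqP; have : p *+ 2 == 0 by rewrite mulr2n -{1}Np addNr.
by rewrite -mulr_natl mulf_eq0 -polyC_natr polyC_eq0 pnatr_eq0.
Qed.

Lemma zsum_antisym (B : nat) (f : int -> {poly rat}) :
  (forall j, f (- 1 - j) = - f j) -> f B%:Z = 0 -> zsum B f = 0.
Proof.
move=> fN fB0; apply: poly_eq0_oppr; rewrite -zsumN; symmetry.
apply: zsum_reflect => //.
by rewrite (_ : - B%:Z - 1 = - 1 - B%:Z) ?fN ?fB0 ?oppr0 //; ring.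
Qed.

Definition altsign (j : int) : {poly rat} := (-1) ^+ `|j|%N.

Lemma altsignN j : altsign (- j) = altsign j.
Proof. by rewrite /altsign abszN. Qed.

Lemma altsign_reflect j : altsign (- 1 - j) = - altsign j.
Proof.
rewrite /altsign; have [j0|j0] := lerP 0 j.
  by rewrite (_ : `|(- 1 - j)%R|%N = `|j|.+1) ?exprS ?mulN1r //; lia.
by rewrite [in RHS](_ : `|j|%N = `|(- 1 - j)%R|.+1) ?exprS ?mulN1r ?opprK //; lia.
Qed.

Definition exp5 (c j : int) : int := ((j * (5 * j + c)) %/ 2)%Z.

Lemma exp5_mul2 c j : (2 %| c - 1)%Z -> exp5 c j * 2 = j * (5 * j + c).
Proof.
move=> /dvdzP[k ck]; apply/divzK/dvdzP.
have -> : c = k * 2 + 1 by lia.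
have [m [r [-> r01]]] : exists m r, j = m * 2 + r /\ (r = 0 \/ r = 1).
  exists (j %/ 2)%Z, (j %% 2)%Z; split; first exact: divz_eq.
  have := modz_ge0 j (isT : 2 != 0 :> int); have := ltz_pmod j (isT : 0 < 2 :> int); lia.
case: r01 => ->.
- by exists (m * (10 * m + 2 * k + 1)); ring.
- by exists ((2 * m + 1) * (5 * m + k + 3)); ring.
Qed.

Lemma exp5_ge0 c j : -5 <= c <= 5 -> 0 <= exp5 c j.
Proof.
move=> c5; rewrite /exp5 divz_ge0 //; have [->|j0] := eqVneq j 0; first by rewrite mul0r.
by have [j_gt0|j_lt0] := ltrP 0 j; [apply: mulr_ge0 | apply: mulr_le0]; lia.
Qed.

Lemma qpowQ_int (z : int) : 0 <= z -> qpowQ z%:~R = Xz z.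
Proof. by move=> z0; rewrite /qpowQ denq_int numq_int eqxx ler0z z0. Qed.

Lemma qpowQ_exp5 c j : (2 %| c - 1)%Z -> -5 <= c <= 5 ->
  qpowQ (j%:~R * (5 * j%:~R + c%:~R) / 2) = Xz (exp5 c j).
Proof.
move=> c_odd c5; rewrite -qpowQ_int ?exp5_ge0 //; congr qpowQ.
apply: (mulIf (_ : 2 != 0)) => //; rewrite mulfVK // -[2]/(2%:~R) -intrM exp5_mul2 //.
by rewrite intrM intrD intrM.
Qed.

Definition Dsum (a L : nat) : {poly rat} := \sum_(n < L.+1) 'X ^+ (n * n + a * n) * qbin L n.

Lemma Dsum_head a L :
  Dsum a L = 1 + \sum_(n < L.+1) 'X ^+ (n.+1 * n.+1 + a * n.+1) * qbin L n.+1.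
Proof.
rewrite /Dsum big_ord_recl [in RHS]big_ord_recr /= (qbin_small L L.+1) //.
by rewrite mulr0 addr0 qbin0 !muln0 expr0 mulr1.
Qed.

Lemma DsumS a L : Dsum a L.+1 = Dsum a L + 'X ^+ (L.+1 + a) * Dsum a.+1 L.
Proof.
rewrite [LHS]Dsum_head [in Dsum a L]Dsum_head.
under eq_bigr => n _ do rewrite qbinSS_dual mulrDr.
rewrite big_split /= [X in 1 + (X + _)]big_ord_recr [X in 1 + (_ + X)]big_ord_recr /=.
rewrite (qbin_small L L.+1) // (qbin_small L L.+2) // !mulr0 !addr0.
rewrite [X in 1 + X]addrC addrA; congr (_ + _).
rewrite /Dsum mulr_sumr; apply: eq_bigr => n _.
rewrite mulrA [RHS]mulrA -!exprD; congr ('X ^+ _ * _).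
by have := ltn_ord n; nia.
Qed.

Lemma DsumS_dual a L : Dsum a L.+1 = Dsum a.+1 L + 'X ^+ a.+1 * Dsum a.+2 L.
Proof.
rewrite [LHS]Dsum_head [in Dsum a.+1 L]Dsum_head.
under eq_bigr => n _ do rewrite qbinSS mulrDr.
rewrite big_split /= [X in 1 + (X + _)]big_ord_recr [X in 1 + (_ + X)]big_ord_recr /=.
rewrite (qbin_small L L.+1) // (qbin_small L L.+2) // !mulr0 !addr0.
rewrite [X in 1 + X]addrC addrA; congr (_ + _ + _).
- by apply: eq_bigr => n _; rewrite mulrA -exprD; congr ('X ^+ _ * _); nia.
- rewrite /Dsum mulr_sumr; apply: eq_bigr => n _.
  by rewrite mulrA -exprD; congr ('X ^+ _ * _); nia.
Qed.

Lemma Dsum1S L : Dsum 1 L.+1 =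
  'X ^+ L.+1 * Dsum 0 L + (1 - 'X ^+ L.+1 + 'X ^+ L.+1 * 'X ^+ L.+1) * Dsum 1 L.
Proof.
have D0S := DsumS 0 L; have D1S := DsumS 1 L; have D0S_dual := DsumS_dual 0 L.
rewrite addn0 in D0S; rewrite addn1 exprS in D1S.
have {}D1S : Dsum 1 L.+1 = Dsum 1 L + 'X ^+ L.+1 * (Dsum 0 L.+1 - Dsum 1 L).
  by rewrite D1S D0S_dual; ring.
by rewrite D1S D0S; ring.
Qed.

Definition summand (c n m j : int) : {poly rat} :=
  altsign j * Xz (exp5 c j) * qbinz n (m - 2 * j).

Lemma summand_window c n m (B : nat) j :
  0 <= m <= n -> n <= 2 * B%:Z + 1 -> (B < `|j|)%N -> summand c n m j = 0.
Proof. by move=> mn nB jB; rewrite /summand qbinz_out ?mulr0 //; lia. Qed.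

Lemma summand_pascal_dual c n m j : 0 <= n ->
  summand c (n + 1) m j = summand c n m j + Xz (n + 1 - m + 2 * j) * summand c n (m - 1) j.
Proof.
move=> n0; rewrite /summand qbinz_pascal_dual // addrC mulrDr mulrCA.
by congr (_ + Xz _ * (_ * qbinz _ _)); ring.
Qed.

Lemma summand_pascal c c' n m j :
  (2 %| c - 1)%Z -> c + c' = 4 -> -1 <= c <= 5 -> 0 <= m -> 0 <= n ->
  summand c (n + 1) (m + 1) j = summand c n m j + Xz (m + 1) * summand c' n (n - m - 1) (- j).
Proof.
move=> c_odd cc' c5 m0 n0; rewrite /summand qbinz_pascal // mulrDr.
rewrite (_ : m + 1 - 2 * j - 1 = m - 2 * j); last by ring.
rewrite altsignN -[qbinz n (m + 1 - 2 * j)]qbinz_sub.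
rewrite (_ : n - (m + 1 - 2 * j) = n - m - 1 - 2 * - j); last by ring.
congr (_ + _); rewrite mulrCA; apply: Xz_mul_qbinz => kn.
have c'_odd : (2 %| c' - 1)%Z.
  by rewrite (_ : c' - 1 = 2 - (c - 1)) ?dvdzB ?dvdzz //; lia.
have := exp5_mul2 c j c_odd; have := exp5_mul2 c' (- j) c'_odd.
have := exp5_ge0 c j; have := exp5_ge0 c' (- j).
have {cc'} ? : c' = 4 - c by lia; subst c'.
move=> *; split; lia.
Qed.

(* The last hypothesis is the exponent balance a + exp5 c (-1-j) = b + exp5 c j, doubled. *)
Lemma summand_reflect c n m a b j : (2 %| c - 1)%Z -> -5 <= c <= 5 ->
  (0 <= n - m - 2 - 2 * j <= n -> 0 <= a /\ 0 <= b) ->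
  2 * a + (10 - 2 * c) * j + 5 - c = 2 * b ->
  Xz a * summand c n m (- 1 - j) = - (Xz b * summand c n (n - m - 2) j).
Proof.
move=> c_odd c5 ab0 ab; rewrite /summand altsign_reflect -[qbinz n (m - _)]qbinz_sub.
rewrite (_ : n - (m - 2 * (- 1 - j)) = n - m - 2 - 2 * j); last by ring.
rewrite (Xz_mul_qbinz _ _ _ _ _ b (exp5 c j)); first by ring.
case/ab0=> a0 b0; split; rewrite ?exp5_ge0 //.
by have := exp5_mul2 c j c_odd; have := exp5_mul2 c (- 1 - j) c_odd; nia.
Qed.

Definition Psum (L : nat) : {poly rat} := zsum L.+1 (summand 1 (2 * L%:Z) L).
Definition Qsum (L : nat) : {poly rat} := zsum L.+1 (summand 3 (2 * L%:Z + 1) L).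

Lemma zsum_summand_widen c n m (L : nat) : 0 <= m <= n -> n <= 2 * L%:Z + 3 ->
  zsum L.+2 (summand c n m) = zsum L.+1 (summand c n m).
Proof.
move=> mn nL; rewrite -addn1 zsum_widen // => j jL.
by apply: (summand_window _ _ _ L.+1) => //; lia.
Qed.

Lemma Psum_rec L : Psum L.+1 = Psum L + 'X ^+ L.+1 * Qsum L.
Proof.
pose Z j := Xz (2 * L%:Z + 1 - L%:Z + 2 * j) * summand 1 (2 * L%:Z) (L%:Z - 1) j.
have Z_antisym j : Z (- 1 - j) = - Z j.
  rewrite /Z (summand_reflect _ _ _ _ (2 * L%:Z + 1 - L%:Z + 2 * j)) //; try lia.
  by rewrite (_ : 2 * L%:Z - (L%:Z - 1) - 2 = L%:Z - 1) //; ring.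
have Z_sum : zsum L.+1 Z = 0.
  apply: zsum_antisym => //; rewrite /Z /summand qbinz_out ?mulr0 //; lia.
have P_split j : summand 1 (2 * L.+1%:Z) L.+1 j =
    summand 1 (2 * L%:Z) L j + Z j + Xz (L%:Z + 1) * summand 3 (2 * L%:Z + 1) L (- j).
  rewrite (_ : 2 * L.+1%:Z = 2 * L%:Z + 1 + 1); last by lia.
  rewrite (_ : L.+1%:Z = L%:Z + 1); last by lia.
  rewrite (summand_pascal _ 3) ?(summand_pascal_dual 1 (2 * L%:Z)) //; try lia.
  by rewrite (_ : 2 * L%:Z + 1 - L%:Z - 1 = L%:Z) //; lia.
rewrite /Psum zsum_summand_widen; try lia.
by rewrite (eq_zsum P_split) !zsumD Z_sum addr0 zsumZ zsum_opp Xz_natS.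
Qed.

Lemma Qsum_rec L : Qsum L.+1 =
  'X ^+ L.+1 * Psum L + (1 - 'X ^+ L.+1 + 'X ^+ L.+1 * 'X ^+ L.+1) * Qsum L.
Proof.
pose U j := Xz (2 * L%:Z + 1 + 1 - L%:Z + 2 * j) * summand 3 (2 * L%:Z + 1) (L%:Z - 1) j.
have U_sum : zsum L.+1 U = - (Xz (L%:Z + 1) * Qsum L).
  rewrite /Qsum -zsumZ -zsumN; apply: zsum_reflect => [j||]; rewrite /U.
  - rewrite (summand_reflect _ _ _ _ (L%:Z + 1)) //; try lia.
    by rewrite (_ : 2 * L%:Z + 1 - (L%:Z - 1) - 2 = L%:Z) //; lia.
  - by rewrite /summand qbinz_out ?mulr0 //; lia.
  - by rewrite /summand qbinz_out ?mulr0 //; lia.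
have Q_split j : summand 3 (2 * L.+1%:Z + 1) L.+1 j = summand 3 (2 * L%:Z + 1) L j + U j
    + Xz (L%:Z + 1) * summand 1 (2 * L.+1%:Z) L.+1 (- j).
  rewrite (_ : 2 * L.+1%:Z = 2 * L%:Z + 1 + 1); last by lia.
  rewrite (_ : L.+1%:Z = L%:Z + 1); last by lia.
  rewrite (summand_pascal _ 1) ?(summand_pascal_dual 3 (2 * L%:Z + 1)) //; try lia.
  by rewrite (_ : 2 * L%:Z + 1 + 1 - L%:Z - 1 = L%:Z + 1) //; lia.
rewrite {1}/Qsum zsum_summand_widen; try lia.
rewrite (eq_zsum Q_split) !zsumD U_sum zsumZ zsum_opp -/(Qsum L).
rewrite -[zsum L.+1 (summand 1 _ _)]zsum_summand_widen; try lia.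
by rewrite -/(Psum L.+1) Psum_rec Xz_natS; ring.
Qed.

Lemma Psum_Qsum_Dsum L : Psum L = Dsum 0 L /\ Qsum L = Dsum 1 L.
Proof.
elim: L => [|L [IHP IHQ]]; last by rewrite Psum_rec Qsum_rec DsumS Dsum1S addn0 IHP IHQ.
rewrite /Psum /Qsum /Dsum /zsum /summand !big_ord_recr !big_ord0 /=.
rewrite /altsign /Xz /qbinz /exp5 /=.
by split; rewrite ?(mulr0, addr0, add0r, mulr1).
Qed.

Lemma G_Qsum L : G L.+1 L (1 / 2) 2 2 = Qsum L.
Proof.
rewrite /G (_ : (`|L.+1%:Z| + `|L%:Z|)%N = (L.+1 + L)%N) // zsum_widen; last first.
  by move=> j jL; rewrite qbinomE qbinz_out ?mulr0 //; lia.
rewrite -zsum_opp; apply: eq_zsum => j; rewrite abszN qbinomE -qbinz_sub.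
rewrite (_ : _ * _ * _ * _ = j%:~R * (5 * j%:~R + 3) / 2); last by rewrite rmorphN; field.
by rewrite (qpowQ_exp5 3) // /summand; congr (_ * qbinz _ _); lia.
Qed.

Theorem mainTheorem7 (L : nat) :
  G (L.+1)%:Z L%:Z (1 / 2) 2 2 =
    zsum (L.+1) (fun j =>
      (-1) ^+ `|j|%N * qpowQ (j%:~R * (5 * j%:~R + 3) / 2)
      * qbinom (2 * L%:Z + 1) (L%:Z - 2 * j))
  /\
  zsum (L.+1) (fun j =>
      (-1) ^+ `|j|%N * qpowQ (j%:~R * (5 * j%:~R + 3) / 2)
      * qbinom (2 * L%:Z + 1) (L%:Z - 2 * j))
  = \sum_(n < L.+1) 'X ^+ (n * n.+1) * qbinom L%:Z n%:Z.
Proof.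
set S := zsum L.+1 _.
have -> : S = Qsum L by apply: eq_zsum => j; rewrite (qpowQ_exp5 3) ?qbinomE.
rewrite G_Qsum (proj2 (Psum_Qsum_Dsum L)); split=> //; apply: eq_bigr => n _.
by rewrite qbinomE mulnSr mulnn mul1n.
Qed.
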